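(* Let $2\le k\le n$ and let $w$ be a word of length $k$. Then \[f(w,n,1)\cdot(3n-4k)\;\le\; f(w,n,2)\;\le\; f(w,n,1)\cdot 2n+4\sum_{i=k}^{n} f(w,i,1).\]
   Context: Let $[n]=\{1,\dots,n\}$. For a positive integer $d$, an $(n,d)$-grid is a function $G:[n]^d\to\Sigma$ for an arbitrary set of letters $\Sigma$. A line of length $k$ in $[n]^d$ is a set $\{p,p+v,\dots,p+(k-1)v\}\subseteq[n]^d$ with $p\in[n]^d$ and $v\in\{-1,0,1\}^d\setminus\{\vec 0\}$ (each such set counted once). For a word $w=w_1\cdots w_k$, such a line contains $w$ in $G$ if $G(p)G(p+v)\cdots G(p+(k-1)v)=w$ or this sequence read backwards equals $w$. $f(w,G)$ is the number of lines of length $k$ in $[n]^d$ containing $w$, and $f(w,n,d)=\max_G f(w,G)$ over all $(n,d)$-grids $G$. In particular $f(w,i,1)$ is the maximum number of sets of $k$ consecutive positions in a sequence of length $i$ that read $w$ forwards or backwards. *)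

From mathcomp Require Import all_boot all_order all_algebra.
Set Implicit Arguments. Unset Strict Implicit. Unset Printing Implicit Defensive.
Import GRing.Theory Num.Theory.
Local Open Scope ring_scope.

(* Points of [n]^d, coordinates shifted to {0,...,n-1}. *)
Definition point (n d : nat) := {ffun 'I_d -> 'I_n}.
(* Directions v in {-1,0,1}^d, encoded by 'I_3 via i |-> i - 1. *)
Definition dir (d : nat) := {ffun 'I_d -> 'I_3}.

Definition dirz d (v : dir d) (i : 'I_d) : int := (v i)%:Z - 1.
Definition nonzero_dir d (v : dir d) : bool := [exists i, dirz v i != 0].

Definition coord n d (p : point n d) (v : dir d) (j : nat) (i : 'I_d) : int :=
  ((p i : nat)%:Z + j%:Z * dirz v i)%R.

Definition is_pt n d (p : point n d) (v : dir d) (j : nat) (x : point n d) : bool :=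
  [forall i, ((x i : nat)%:Z == coord p v j i)].

Definition fits n d (p : point n d) (v : dir d) (k : nat) : bool :=
  [forall j : 'I_k, [exists x : point n d, is_pt p v j x]].

Definition line_set n d (p : point n d) (v : dir d) (k : nat) : {set point n d} :=
  [set x | [exists j : 'I_k, is_pt p v j x]].

Definition reads (T : finType) n d (G : {ffun point n d -> T}) (p : point n d)
  (v : dir d) (u : seq T) : bool :=
  [forall j : 'I_(size u), [forall x : point n d,
     is_pt p v j x ==> (G x == nth (G x) u j)]].

Definition contains_word (T : finType) n d (G : {ffun point n d -> T})
  (p : point n d) (v : dir d) (w : seq T) : bool :=
  reads G p v w || reads G p v (rev w).

(* the set of lines of length |w| (as point sets, each counted once) containing w *)
Definition lines_with (T : finType) n d (G : {ffun point n d -> T}) (w : seq T)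
  : {set {set point n d}} :=
  [set L | [exists p : point n d, [exists v : dir d,
     [&& nonzero_dir v, fits p v (size w), L == line_set p v (size w)
       & contains_word G p v w]]]].

Definition fG (T : finType) n d (G : {ffun point n d -> T}) (w : seq T) : nat :=
  #|lines_with G w|.

Definition f (T : finType) (w : seq T) (n d : nat) : nat :=
  \max_(G : {ffun point n d -> T}) fG G w.

(* Upper bound: every line of the square grid of side n lies on a row, a
   column or a diagonal.  On a maximal segment of length i the plane grid
   restricts to a 1-dimensional grid of length i whose lines are exactly the
   lines of the plane grid on that segment, so the segment carries at most
   f(w,i,1) lines containing w.  There are 2n rows and columns of length n and,
   splitting each diagonal direction at the main diagonal, four diagonal
   segments of each length i <= n; those with i < |w| carry no line at all.

   Lower bound: take an optimal 1-dimensional grid S of length n and set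
   G(x,y) = S(x).  A left-to-right occurrence of w in S on [t, t + |w|) gives,
   for each of the n - |w| + 1 possible lowest rows and each slope in {-1,0,1},
   a line of G reading S on [t, t + |w|).  A common coordinate moving by +1
   makes these lines pairwise distinct, and 3(n - |w| + 1) >= 3n - 4|w|. *)

From mathcomp Require Import all_boot ssralg ssrnum ssrint.
From mathcomp Require Import zify ring.
Import GRing.Theory.
Set Implicit Arguments. Unset Strict Implicit. Unset Printing Implicit Defensive.
Local Open Scope ring_scope.

Section Lines.
Variables (T : finType) (n d : nat).
Implicit Types (p x y : point n d) (v : dir d) (G : {ffun point n d -> T}) (w u : seq T).

Lemma dirz_bound v i : -1 <= dirz v i <= 1.
Proof. by rewrite /dirz; have := ltn_ord (v i); lia. Qed.

Lemma dirz_inj v v' : (forall i, dirz v i = dirz v' i) -> v = v'.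
Proof. by move=> e; apply/ffunP => i; apply/val_inj => /=; have := e i; rewrite /dirz; lia. Qed.

Lemma is_ptP p v j x :
  reflect (forall i, (x i : nat)%:Z = coord p v j i) (is_pt p v j x).
Proof. by apply: (iffP forallP) => e i; apply/eqP/e. Qed.

Lemma is_pt_inj p v j x y : is_pt p v j x -> is_pt p v j y -> x = y.
Proof.
move=> /is_ptP ex /is_ptP ey; apply/ffunP => i; apply/val_inj => /=.
by have := ex i; rewrite -ey; lia.
Qed.

Lemma is_pt0 p v : is_pt p v 0 p.
Proof. by apply/is_ptP => i; rewrite /coord mul0r addr0. Qed.

Lemma exists_point (c : 'I_d -> int) :
  (forall i, 0 <= c i < n%:Z) -> exists x : point n d, forall i, (x i : nat)%:Z = c i.
Proof.
move=> cb; have cn i : (absz (c i) < n)%N by have := cb i; lia.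
by exists [ffun i => Ordinal (cn i)] => i; rewrite ffunE /=; have := cb i; lia.
Qed.

Lemma fitsP p v k :
  reflect (forall j, (j < k)%N -> forall i, 0 <= coord p v j i < n%:Z) (fits p v k).
Proof.
apply: (iffP forallP) => [fv j jk i | cb j].
  have /existsP [x /is_ptP <-] := fv (Ordinal jk).
  by case: (x i) => a /=; lia.
by have [x ex] := exists_point (cb j (ltn_ord j)); apply/existsP; exists x; apply/is_ptP.
Qed.

Lemma fits_point p v k j : fits p v k -> (j < k)%N -> exists x, is_pt p v j x.
Proof.
move=> /fitsP cb jk; have [x ex] := exists_point (cb j jk).
by exists x; apply/is_ptP.
Qed.

Lemma line_setP p v k x :
  reflect (exists2 j, (j < k)%N & is_pt p v j x) (x \in line_set p v k).
Proof.
rewrite inE; apply: (iffP existsP) => [[j ej] | [j jk ej]]; first by exists j.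
by exists (Ordinal jk).
Qed.

Lemma readsP G p v u (a : T) :
  reflect (forall j x, (j < size u)%N -> is_pt p v j x -> G x = nth a u j)
          (reads G p v u).
Proof.
apply: (iffP forallP) => [r j x ju ej | r j].
  by have /forallP/(_ x)/implyP/(_ ej)/eqP -> := r (Ordinal ju); apply: set_nth_default.
apply/forallP => x; apply/implyP => ej.
by apply/eqP; rewrite (set_nth_default a (G x) (ltn_ord j)); apply: r.
Qed.

Lemma lines_withP G w L :
  reflect (exists p, exists v, [/\ nonzero_dir v, fits p v (size w),
                                   L = line_set p v (size w) & contains_word G p v w])
          (L \in lines_with G w).
Proof.
rewrite inE; apply: (iffP existsP) => [[p /existsP [v]] | [p [v [nz fv -> cw]]]].
  by case/and4P=> nz fv /eqP eL cw; exists p, v.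
by exists p; apply/existsP; exists v; rewrite nz fv eqxx.
Qed.

Lemma fG_le_f G w : (fG G w <= f w n d)%N.
Proof. exact: (@leq_bigmax _ (fun G => fG G w)). Qed.

Lemma f_eq0 w : (n < size w)%N -> f w n d = 0%N.
Proof.
move=> nk; apply/eqP; rewrite -leqn0; apply/bigmax_leqP => G _.
rewrite leqn0 cards_eq0 -subset0; apply/subsetP => L.
move=> /lines_withP [p [v [/existsP [i nzi] /fitsP fv _ _]]]; exfalso.
have k0 : (0 < size w)%N by lia.
have kk : ((size w).-1 < size w)%N by lia.
(* The two ends of a line differ by [size w - 1 >= n] in a moving coordinate. *)
have := fv _ k0 i; have := fv _ kk i; have := dirz_bound v i.
rewrite /coord; move: nzi; nia.
Qed.

End Lines.

Section Transfer.
Variables (T : finType) (n d m e : nat).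
Implicit Types (p x : point n d) (v : dir d) (q y : point m e) (s : dir e).
Implicit Types (G : {ffun point n d -> T}) (w u : seq T).

Lemma reads_transfer G (G' : {ffun point m e -> T}) p v q s u :
  fits p v (size u) ->
  (forall j x y, (j < size u)%N -> is_pt p v j x -> is_pt q s j y -> G' y = G x) ->
  reads G p v u -> reads G' q s u.
Proof.
move=> fv eG /(readsP _ _ _ _ (G p)) r; apply/(readsP _ _ _ _ (G p)) => j y ju ey.
by have [x ex] := fits_point fv ju; rewrite (eG j x y) //; apply: r.
Qed.

Lemma contains_word_transfer G (G' : {ffun point m e -> T}) p v q s w :
  fits p v (size w) ->
  (forall j x y, (j < size w)%N -> is_pt p v j x -> is_pt q s j y -> G' y = G x) ->
  contains_word G p v w -> contains_word G' q s w.
Proof.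
move=> fv eG /orP [] r; apply/orP; [left | right]; apply: reads_transfer r => //;
  by rewrite size_rev.
Qed.

Variable h : point m e -> point n d.

Lemma fits_image p v q s k :
  fits q s k -> (forall j y, (j < k)%N -> is_pt q s j y -> is_pt p v j (h y)) ->
  fits p v k.
Proof.
move=> fq hq; apply/forallP => j; have [y ey] := fits_point fq (ltn_ord j).
by apply/existsP; exists (h y); apply: hq.
Qed.

Lemma line_set_image p v q s k :
  fits q s k -> (forall j y, (j < k)%N -> is_pt q s j y -> is_pt p v j (h y)) ->
  line_set p v k = h @: line_set q s k.
Proof.
move=> fq hq; apply/setP => x.
apply/line_setP/imsetP => [[j jk ex] | [y /line_setP [j jk ey] ->]].
  have [y ey] := fits_point fq jk.
  by exists y; [apply/line_setP; exists j | apply: is_pt_inj ex (hq j y jk ey)].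
by exists j => //; apply: hq.
Qed.

Definition image_lines G w : {set {set point n d}} :=
  (fun L : {set point m e} => h @: L) @: lines_with [ffun y => G (h y)] w.

Lemma card_image_lines G w : (#|image_lines G w| <= f w m e)%N.
Proof. exact: leq_trans (leq_imset_card _ _) (fG_le_f _ _). Qed.

Lemma line_set_in_image_lines G w p v q s :
  nonzero_dir s -> fits q s (size w) ->
  (forall j y, (j < size w)%N -> is_pt q s j y -> is_pt p v j (h y)) ->
  contains_word G p v w -> line_set p v (size w) \in image_lines G w.
Proof.
move=> nzs fq hq cw; have fv := fits_image fq hq.
apply/imsetP; exists (line_set q s (size w)); last exact: line_set_image.
apply/lines_withP; exists q, s; split=> //.
apply: contains_word_transfer cw => // j x y jw ex ey.
by rewrite ffunE (is_pt_inj ex (hq j y jw ey)).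
Qed.

End Transfer.

Lemma line_set_in_image_lines_nat (T : finType) n d (G : {ffun point n d -> T}) w p v
    (c : nat -> point n d) m (t0 : int) (s : dir 1) :
  (0 < size w)%N -> nonzero_dir s ->
  (forall j, (j < size w)%N -> 0 <= t0 + j%:Z * dirz s ord0 < m%:Z /\
                               is_pt p v j (c (absz (t0 + j%:Z * dirz s ord0)))) ->
  contains_word G p v w ->
  line_set p v (size w) \in image_lines (fun y : point m 1 => c (y ord0)) G w.
Proof.
move=> w0 nzs hc cw; have [t0b _] := hc 0%N w0; rewrite mul0r addr0 in t0b.
have [q qE] := @exists_point m 1 (fun=> t0) (fun=> t0b).
have coordq j i : coord q s j i = t0 + j%:Z * dirz s ord0 by rewrite (ord1 i) /coord qE.
apply: (line_set_in_image_lines (q := q) nzs _ _ cw).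
  by apply/fitsP => j jw i; rewrite coordq; case: (hc j jw).
move=> j y jw /is_ptP ey; have [_] := hc j jw; congr (is_pt _ _ _ (c _)).
by have := ey ord0; rewrite coordq; lia.
Qed.

Lemma card_le_sum_cover (I U : finType) (A : {set U}) (F : I -> {set U}) :
  (forall x, x \in A -> exists i, x \in F i) -> (#|A| <= \sum_i #|F i|)%N.
Proof.
move=> cov; have sAF : A \subset \bigcup_i F i.
  by apply/subsetP => x /cov [i Fx]; apply/bigcupP; exists i.
apply: leq_trans (subset_leq_card sAF) _.
elim/big_ind2: _ => [|s1 A1 s2 A2 le1 le2|i _]; rewrite ?cards0 //.
exact: leq_trans (leq_card_setU A1 A2) (leq_add le1 le2).
Qed.

Lemma ord2_cases (i : 'I_2) : i = ord0 \/ i = ord_max.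
Proof. by case: i => -[|[|//]] ?; [left | right]; apply: val_inj. Qed.

Section Plane.
Variables (T : finType) (n : nat).
Implicit Types (p : point n.+1 2) (v : dir 2) (G : {ffun point n.+1 2 -> T}) (w : seq T).

(* [inord] turns coordinates beyond [n] into junk; every use supplies the bound. *)
Definition plane_point (xy : nat * nat) : point n.+1 2 :=
  [ffun i => inord (if i == ord0 then xy.1 else xy.2)].

Lemma is_pt_plane_point p v j xy :
  (xy.1 <= n)%N -> (xy.2 <= n)%N ->
  xy.1%:Z = coord p v j ord0 -> xy.2%:Z = coord p v j ord_max ->
  is_pt p v j (plane_point xy).
Proof.
move=> x_le y_le ex ey; apply/is_ptP => i.
by case: (ord2_cases i) => ->; rewrite ffunE inordK.
Qed.

(* [chain c a t], for t = 0, 1, ..., runs through the a-th segment of family c: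
   rows (c = 0), columns (1), the diagonals x - y = a and y - x = a (2, 3), and
   the antidiagonals x + y = n - a and x + y = n + a (4, 5). *)
Definition chain (c : 'I_6) (a t : nat) : nat * nat :=
  match nat_of_ord c with
  | 0 => (t, a)
  | 1 => (a, t)
  | 2 => (a + t, t)
  | 3 => (t, a + t)
  | 4 => (t, n - a - t)
  | _ => (a + t, n - t)
  end%N.

Definition chain_len (c : 'I_6) (a : nat) : nat :=
  if (c < 2)%N then n.+1 else (n.+1 - a)%N.

Definition chain_lines G w (ca : 'I_6 * 'I_n.+1) : {set {set point n.+1 2}} :=
  image_lines
    (fun y : point (chain_len ca.1 ca.2) 1 => plane_point (chain ca.1 ca.2 (y ord0))) G w.

Lemma line_set_in_chain_lines G w p v (c : 'I_6) (a : nat) (t0 : int) (i : 'I_2) :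
  (a <= n)%N -> (0 < size w)%N -> fits p v (size w) -> dirz v i != 0 ->
  (forall j : nat, 0 <= coord p v j ord0 <= n%:Z -> 0 <= coord p v j ord_max <= n%:Z ->
     let t := t0 + j%:Z * dirz v i in
     [/\ 0 <= t < (chain_len c a)%:Z, (chain c a (absz t)).1%:Z = coord p v j ord0
       & (chain c a (absz t)).2%:Z = coord p v j ord_max]) ->
  contains_word G p v w -> line_set p v (size w) \in chain_lines G w (c, inord a).
Proof.
move=> a_le w0 /fitsP fv nzi ht cw; rewrite /chain_lines /= inordK //.
apply: (@line_set_in_image_lines_nat _ _ _ G w p v (fun t => plane_point (chain c a t)) _ t0
  [ffun=> v i]) => // [|j jw].
  by apply/existsP; exists ord0; rewrite /dirz ffunE.
have [xb yb] : (0 <= coord p v j ord0 <= n%:Z) /\ (0 <= coord p v j ord_max <= n%:Z).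
  by have := fv j jw ord0; have := fv j jw ord_max; lia.
rewrite /dirz ffunE -/(dirz v i); have [tb ex ey] := ht j xb yb.
by split=> //; apply: is_pt_plane_point => //; lia.
Qed.

Lemma chain_lines_cover G w p v :
  (0 < size w)%N -> nonzero_dir v -> fits p v (size w) -> contains_word G p v w ->
  exists ca, line_set p v (size w) \in chain_lines G w ca.
Proof.
move=> w0 /existsP [i0 nzi0] fv cw.
have x_le := ltn_ord (p ord0); have y_le := ltn_ord (p ord_max).
set x := nat_of_ord (p ord0) in x_le *; set y := nat_of_ord (p ord_max) in y_le *.
have d0b := dirz_bound v ord0; have d1b := dirz_bound v ord_max.
have nz : dirz v ord0 != 0 \/ dirz v ord_max != 0.
  by case: (ord2_cases i0) nzi0 => ->; [left | right].
pose on_chain := @line_set_in_chain_lines G w p v.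
have [d1_0 | d1_nz] := eqVneq (dirz v ord_max) 0.
  eexists; apply: (on_chain (@Ordinal 6 0 isT) y x%:Z ord0) => //; try lia.
  by move=> j /=; rewrite /coord /chain_len /chain /= d1_0; split; lia.
have [d0_0 | d0_nz] := eqVneq (dirz v ord0) 0.
  eexists; apply: (on_chain (@Ordinal 6 1 isT) x y%:Z ord_max) => //; try lia.
  by move=> j /=; rewrite /coord /chain_len /chain /= d0_0; split; lia.
have [d_eq | d_opp] : dirz v ord_max = dirz v ord0 \/ dirz v ord_max = - dirz v ord0 by lia.
  have [y_le_x | x_lt_y] := leqP y x.
    eexists; apply: (on_chain (@Ordinal 6 2 isT) (x - y)%N y%:Z ord0) => //; try lia.
    by move=> j /=; rewrite /coord /chain_len /chain /= d_eq; split; lia.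
  eexists; apply: (on_chain (@Ordinal 6 3 isT) (y - x)%N x%:Z ord0) => //; try lia.
  by move=> j /=; rewrite /coord /chain_len /chain /= d_eq; split; lia.
have [xy_le_n | n_lt_xy] := leqP (x + y) n.
  eexists; apply: (on_chain (@Ordinal 6 4 isT) (n - (x + y))%N x%:Z ord0) => //; try lia.
  by move=> j /=; rewrite /coord /chain_len /chain /= d_opp; split; lia.
eexists; apply: (on_chain (@Ordinal 6 5 isT) (x + y - n)%N (n%:Z - y%:Z) ord0) => //; try lia.
by move=> j /=; rewrite /coord /chain_len /chain /= d_opp; split; lia.
Qed.

Lemma sum_chain_len (F : nat -> nat) :
  (\sum_(ca : 'I_6 * 'I_n.+1) F (chain_len ca.1 ca.2) =
   F n.+1 * (2 * n.+1) + 4 * \sum_(a < n.+1) F (n.+1 - a))%N.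
Proof.
rewrite -(pair_big xpredT xpredT (fun (c : 'I_6) (a : 'I_n.+1) => F (chain_len c a))) /=.
rewrite !big_ord_recl big_ord0 /chain_len /= sum_nat_const card_ord; lia.
Qed.

Lemma fG_plane_le G w :
  (0 < size w)%N -> (fG G w <= \sum_(ca : 'I_6 * 'I_n.+1) f w (chain_len ca.1 ca.2) 1)%N.
Proof.
move=> w0; apply: (@leq_trans (\sum_ca #|chain_lines G w ca|)).
  apply: card_le_sum_cover => L /lines_withP [p [v [nzv fv -> cw]]].
  exact: chain_lines_cover.
by apply: leq_sum => ca _; apply: card_image_lines.
Qed.

End Plane.

Lemma sum_f_rev (T : finType) (w : seq T) N :
  (0 < size w <= N.+1)%N ->
  (\sum_(a < N) f w (N - a) 1 = \sum_(size w <= i < N.+1) f w i 1)%N.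
Proof.
case/andP => w0 wN; have -> : (\sum_(a < N) f w (N - a) 1 = \sum_(1 <= i < N.+1) f w i 1)%N.
  by rewrite big_rev_mkord subSS subn0; apply: eq_bigr => a _; rewrite subSS.
rewrite (big_cat_nat w0 wN) /= big_nat_cond big1 ?add0n // => i /andP [/andP [_ iw] _].
exact: f_eq0.
Qed.

Lemma f_plane_le (T : finType) (w : seq T) n :
  (0 < size w <= n.+1)%N ->
  (f w n.+1 2 <= f w n.+1 1 * (2 * n.+1) + 4 * \sum_(size w <= i < n.+2) f w i 1)%N.
Proof.
case/andP=> w0 wn; rewrite -sum_f_rev ?w0 ?(leqW wn) //.
have /= <- := @sum_chain_len n (fun i => f w i 1).
by apply/bigmax_leqP => G _; apply: fG_plane_le.
Qed.

Section Reversal.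
Variables (T : finType) (n d : nat).
Implicit Types (p q x : point n d) (v : dir d) (G : {ffun point n d -> T}) (w u : seq T).

Definition dir_opp v : dir d := [ffun i => rev_ord (v i)].

Lemma dirz_opp v i : dirz (dir_opp v) i = - dirz v i.
Proof. by rewrite /dirz ffunE /=; have := ltn_ord (v i); lia. Qed.

Lemma is_pt_opp p v q k j x :
  is_pt p v k.-1 q -> (j < k)%N -> is_pt q (dir_opp v) j x = is_pt p v (k.-1 - j) x.
Proof.
move=> /is_ptP qE jk; have coordE i : coord q (dir_opp v) j i = coord p v (k.-1 - j) i.
  by rewrite /coord qE /coord dirz_opp -subzn; [ring | lia].
by apply/is_ptP/is_ptP => e i; rewrite e coordE.
Qed.

Lemma line_set_opp p v q k :
  is_pt p v k.-1 q -> line_set q (dir_opp v) k = line_set p v k.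
Proof.
move=> qk; apply/setP => x; apply/line_setP/line_setP => -[j jk ej].
  by exists (k.-1 - j)%N; [lia | rewrite -(is_pt_opp _ qk jk)].
have jk' : (k.-1 - j < k)%N by lia.
by exists (k.-1 - j)%N => //; rewrite (is_pt_opp _ qk jk') subKn //; lia.
Qed.

Lemma fits_opp p v q k : is_pt p v k.-1 q -> fits p v k -> fits q (dir_opp v) k.
Proof.
move=> qk fv; apply/forallP => j; have jk : (k.-1 - j < k)%N by have := ltn_ord j; lia.
have [x ex] := fits_point fv jk.
by apply/existsP; exists x; rewrite (is_pt_opp _ qk (ltn_ord j)).
Qed.

Lemma reads_opp G p v q u :
  is_pt p v (size u).-1 q -> reads G p v u -> reads G q (dir_opp v) (rev u).
Proof.
move=> qk /(readsP _ _ _ _ (G p)) r; apply/(readsP _ _ _ _ (G p)) => j x.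
rewrite size_rev => ju; rewrite (is_pt_opp _ qk ju) => ex.
have ju' : ((size u).-1 - j < size u)%N by lia.
by rewrite nth_rev // (r _ _ ju' ex); congr nth; lia.
Qed.

Lemma contains_word_opp G p v q w :
  is_pt p v (size w).-1 q -> contains_word G p v w -> contains_word G q (dir_opp v) w.
Proof.
move=> qk /orP [] r; apply/orP; [right; exact: reads_opp qk r | left].
by rewrite -[w]revK; apply: reads_opp r; rewrite size_rev.
Qed.

End Reversal.

Lemma line_set_inj (n d : nat) (p p' : point n d) (v v' : dir d) k i :
  (1 < k)%N -> fits p v k -> dirz v i = 1 -> dirz v' i = 1 ->
  line_set p v k = line_set p' v' k -> p = p' /\ v = v'.
Proof.
move=> k1 fv vi v'i eL.
have onL' j x : (j < k)%N -> is_pt p v j x -> exists2 j', (j' < k)%N & is_pt p' v' j' x.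
  by move=> jk ex; apply/line_setP; rewrite -eL; apply/line_setP; exists j.
have [j' _ /is_ptP e'] := onL' 0%N p (ltnW k1) (is_pt0 p v).
have /line_setP [j _ /is_ptP e] : p' \in line_set p v k.
  by rewrite eL; apply/line_setP; exists 0%N; [lia | exact: is_pt0].
have j'0 : j' = 0%N by have := e i; have := e' i; rewrite /coord vi v'i; lia.
have pp' : p = p' by apply: (is_pt_inj _ (is_pt0 p' v')); apply/is_ptP; rewrite -j'0.
have [x1 /is_ptP e1] := fits_point fv k1.
have [j1 _ /is_ptP e1'] := onL' 1%N x1 k1 (introT (is_ptP _ _ _ _) e1).
split=> //; apply: dirz_inj => i0.
have := e1 i; have := e1' i; have := e1 i0; have := e1' i0.
by rewrite /coord -pp' vi v'i; lia.
Qed.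

Section Line.
Variables (T : finType) (n : nat).
Implicit Types (S : {ffun point n 1 -> T}) (w : seq T).

Definition dir_up : dir 1 := [ffun=> ord_max].

Lemma dirz_up i : dirz dir_up i = 1.
Proof. by rewrite /dirz ffunE. Qed.

Definition occurrences S w : {set point n 1} :=
  [set q | fits q dir_up (size w) && contains_word S q dir_up w].

Lemma dir1_cases (v : dir 1) : nonzero_dir v -> v = dir_up \/ dir_opp v = dir_up.
Proof.
move=> /existsP [i]; rewrite (ord1 i) /dirz => nz.
have [e | e] : v ord0 = ord_max \/ v ord0 = ord0.
  by move: nz; case: (v ord0) => -[|[|[|]]] //= ? _; [right | left]; apply: val_inj.
  by left; apply/ffunP => j; rewrite (ord1 j) !ffunE e.
by right; apply/ffunP => j; rewrite (ord1 j) !ffunE e; apply: val_inj.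
Qed.

Lemma fG_le_card_occurrences S w : (0 < size w)%N -> (fG S w <= #|occurrences S w|)%N.
Proof.
move=> w0; have sub : lines_with S w \subset
    (fun q => line_set q dir_up (size w)) @: occurrences S w.
  apply/subsetP => L /lines_withP [p [v [nzv fv -> cw]]].
  case: (dir1_cases nzv) => ev.
    by apply/imsetP; exists p; [rewrite inE -ev fv cw | rewrite ev].
  have wk : ((size w).-1 < size w)%N by lia.
  have [q qk] := fits_point fv wk.
  apply/imsetP; exists q; last by rewrite -ev (line_set_opp qk).
  by rewrite inE -ev (fits_opp qk fv) (contains_word_opp qk cw).
exact: leq_trans (subset_leq_card sub) (leq_imset_card _ _).
Qed.

End Line.

Lemma slope_offset_bound (s : 'I_3) k j : (j < k)%N ->
  0 <= (if s == ord0 then k.-1 else 0%N)%:Z + j%:Z * ((s : nat)%:Z - 1) <= k.-1%:Z.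
Proof. by case: s => -[|[|[|//]]] ? /=; lia. Qed.

Section Lifting.
Variables (T : finType) (n : nat) (S : {ffun point n.+1 1 -> T}) (w : seq T).
Hypothesis w_gt1 : (1 < size w)%N.
Hypothesis w_le : (size w <= n.+1)%N.

Definition lifted_grid : {ffun point n.+1 2 -> T} :=
  [ffun z : point n.+1 2 => S [ffun=> z ord0]].

Definition slope_dir (s : 'I_3) : dir 2 := [ffun i => if i == ord0 then ord_max else s].

Definition lifting_index := (point n.+1 1 * 'I_(n.+1 - size w).+1 * 'I_3)%type.

(* The slope is [u.2 - 1]; lines of slope -1 start [size w - 1] rows higher, so
   that every line stays within the rows [u.1.2, u.1.2 + size w). *)
Definition lifted_start (u : lifting_index) : point n.+1 2 :=
  plane_point n (nat_of_ord (u.1.1 ord0), u.1.2 + (if u.2 == ord0 then (size w).-1 else 0))%N.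

Definition lifted_line (u : lifting_index) : {set point n.+1 2} :=
  line_set (lifted_start u) (slope_dir u.2) (size w).

Lemma lifted_startE (u : lifting_index) :
  (lifted_start u ord0 : nat) = u.1.1 ord0 /\
  (lifted_start u ord_max : nat) = (u.1.2 + (if u.2 == ord0 then (size w).-1 else 0))%N.
Proof.
have qb := ltn_ord (u.1.1 ord0); have yb := ltn_ord u.1.2.
by rewrite !ffunE /= !inordK //; case: eqP; lia.
Qed.

Lemma coord_lifted_start (u : lifting_index) j i :
  coord (lifted_start u) (slope_dir u.2) j i =
  (if i == ord0 then (u.1.1 ord0 : nat)%:Z + j%:Z
   else (u.1.2 + (if u.2 == ord0 then (size w).-1 else 0))%N%:Z + j%:Z * ((u.2 : nat)%:Z - 1)).
Proof.
have [P0 P1] := lifted_startE u.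
by case: (ord2_cases i) => ->; rewrite /coord /dirz ?P0 ?P1 ffunE /=; lia.
Qed.

Lemma fits_lifted (u : lifting_index) :
  u.1.1 \in occurrences S w -> fits (lifted_start u) (slope_dir u.2) (size w).
Proof.
rewrite inE => /andP [/fitsP fq _]; have yb := ltn_ord u.1.2.
apply/fitsP => j jw i; have := fq j jw ord0; rewrite coord_lifted_start /coord dirz_up.
by case: ifP => _; [lia | have := slope_offset_bound u.2 jw; lia].
Qed.

Lemma lifted_line_in (u : lifting_index) :
  u.1.1 \in occurrences S w -> lifted_line u \in lines_with lifted_grid w.
Proof.
move=> occ; have fu := fits_lifted occ; move: occ; rewrite inE => /andP [fq cw].
apply/lines_withP; exists (lifted_start u), (slope_dir u.2); split=> //.
  by apply/existsP; exists ord0; rewrite /dirz ffunE.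
apply: contains_word_transfer cw => // j x z jw /is_ptP ex /is_ptP ez.
rewrite ffunE; congr (S _); apply/ffunP => i; rewrite (ord1 i) ffunE; apply/val_inj => /=.
by have := ex ord0; have := ez ord0; rewrite coord_lifted_start /coord dirz_up /=; lia.
Qed.

Lemma lifted_line_inj : {in [set u | u.1.1 \in occurrences S w] &, injective lifted_line}.
Proof.
move=> u u'; rewrite in_set => occ _ eL.
case: u occ eL => -[q y] s occ; case: u' => -[q' y'] s' eL.
have dir0 t : dirz (slope_dir t) ord0 = 1 by rewrite /dirz ffunE.
have [eP /(congr1 (fun v : dir 2 => v ord_max))] :=
  line_set_inj w_gt1 (fits_lifted occ) (dir0 _) (dir0 _) eL.
rewrite !ffunE /= => es; subst s'.
have [P0 P1] := lifted_startE (q, y, s); have [P0' P1'] := lifted_startE (q', y', s).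
rewrite eP in P0 P1; rewrite P0' in P0; rewrite P1' /= in P1.
have -> : q = q' by apply/ffunP => i; rewrite (ord1 i); apply/val_inj.
by have -> : y = y' by apply/val_inj => /=; lia.
Qed.

Lemma card_occurrences_le :
  (#|occurrences S w| * ((n.+1 - size w).+1 * 3) <= fG lifted_grid w)%N.
Proof.
set D := [set u : lifting_index | u.1.1 \in occurrences S w].
have -> : (#|occurrences S w| * ((n.+1 - size w).+1 * 3) = #|D|)%N.
  have -> : D = setX (setX (occurrences S w) setT) setT.
    by apply/setP => u; rewrite !inE !andbT.
  by rewrite !cardsX !cardsT !card_ord mulnA.
rewrite -(card_in_imset lifted_line_inj); apply/subset_leq_card/subsetP => L.
by case/imsetP => u uD ->; apply: lifted_line_in; rewrite inE in uD.
Qed.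

End Lifting.

Lemma f_plane_ge (T : finType) (w : seq T) n :
  (1 < size w <= n.+1)%N -> (f w n.+1 1 * ((n.+1 - size w).+1 * 3) <= f w n.+1 2)%N.
Proof.
case/andP => w_gt1 w_le; rewrite {1}/f; elim/big_ind: _ => [// | a b ha hb | S _].
  by rewrite maxnMl geq_max ha hb.
apply: leq_trans (fG_le_f (lifted_grid S) w).
apply: leq_trans (card_occurrences_le S w_gt1 w_le).
exact: leq_mul (fG_le_card_occurrences S (ltnW w_gt1)) (leqnn _).
Qed.

Unset Implicit Arguments.

Theorem theorem23 (T : finType) (w : seq T) (n : nat) :
  (2 <= size w)%N -> (size w <= n)%N ->
  ((f w n 1)%:Z * (3 * n%:Z - 4 * (size w)%:Z) <= (f w n 2)%:Z)%R /\
  (f w n 2 <= f w n 1 * (2 * n) + 4 * \sum_(size w <= i < n.+1) f w i 1)%N.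
Proof.
move=> w_ge2; case: n => [|n] w_le; first lia.
split; last by apply: f_plane_le; lia.
have w_range : (1 < size w <= n.+1)%N by rewrite w_ge2.
have := f_plane_ge w_range; nia.
Qed.
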